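(* Let $a,b$ be positive integers and $c$ an integer with $-b<c<a$, let $d=\gcd(a,b,c)$, $a'=a/d$, $b'=b/d$, $c'=c/d$, $d'=\gcd(a',b')$, and let $k\in\mathbb{N}\cup\{\infty\}$ with $k\geq d'-1$. If $S$ is a basis (generating set as a $T_{\mathbb{Z}}$-ideal) for $T_{\mathbb{Z}}(E_{(-b',c',a')}^{(\infty,k,\infty)})$, then the $T_{\mathbb{Z}}$-ideal $T_{\mathbb{Z}}(E_{(-b,c,a)}^{(\infty,k,\infty)})$ is generated by $S'\cup N$, where $S'=\{\Psi_d(\Phi_d(f)) : f\in S\}$ and $N=\{x_i^m\in X: m\notin d\mathbb{Z}\}$.
   Context: $F$ is a field of characteristic zero; $E$ is the Grassmann algebra of an infinite-dimensional $F$-vector space with basis $e_1,e_2,\dots$. For pairwise distinct integers $r_1,\dots,r_n$ and $v_j\in\mathbb{N}\cup\{\infty\}$, $E_{(r_1,\dots,r_n)}^{(v_1,\dots,v_n)}$ is the $\mathbb{Z}$-grading obtained by splitting $\{e_i\}$ into $n$ disjoint sets of cardinalities $v_1,\dots,v_n$, giving elements of the $j$-th set degree $r_j$ and monomials the sum of degrees. For a group $G$, $F\langle X|G\rangle$ is the free associative algebra on variables $x_i^g$ of degree $g$; $X$ is the set of variables; $T_G(A)$ is the ideal of graded identities of a $G$-graded algebra $A$; a $T_G$-ideal is an ideal invariant under degree-preserving endomorphisms. $\Phi_d:F\langle X|\mathbb{Z}\rangle\to F\langle X|d\mathbb{Z}\rangle$ is the isomorphism $x_i^n\mapsto x_i^{dn}$,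 and $\Psi_d:F\langle X|d\mathbb{Z}\rangle\to F\langle X|\mathbb{Z}\rangle$ is the homomorphism $x_i^{dn}\mapsto x_i^{dn}$. *)

From HB Require Import structures.
From mathcomp Require Import all_boot all_order all_algebra.
From mathcomp Require Import finmap freeg.
Set Implicit Arguments. Unset Strict Implicit. Unset Printing Implicit Defensive.
Import Order.TTheory GRing.Theory Num.Theory.
Local Open Scope ring_scope.
Local Open Scope fset_scope.

Section Defs.
Variable F : fieldType.

(* E = free F-module on the finite subsets S of nat; the basis vector
   e_S stands for e_{s_1} e_{s_2} ... e_{s_k}, s_1 < ... < s_k.
   (The generators e_0, e_1, e_2, ... form a countably infinite basis
   of the underlying vector space.) *)
Definition GE := {freeg {fset nat} / F}.

Definition ginv (S T : {fset nat}) : nat :=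
  \sum_(s <- enum_fset S) \sum_(t <- enum_fset T) (t < s)%N.

Definition gmono (S T : {fset nat}) : GE :=
  if S `&` T == fset0 then (-1) ^+ ginv S T *: << S `|` T >> else 0.

Definition gmul (x y : GE) : GE :=
  fglift (fun S => fglift (fun T => gmono S T) y) x.

Definition gone : GE := << (fset0 : {fset nat}) >>.

(* A Z-grading of E of the form E^{(v_1,..,v_n)}_{(r_1,..,r_n)} is encoded by
   the degree function deg : nat -> int of the generators e_i;
   the degree of the monomial e_S is the sum of the degrees. *)
Definition gdegS (deg : nat -> int) (S : {fset nat}) : int :=
  \sum_(i <- enum_fset S) deg i.

Definition ghomog (deg : nat -> int) (g : int) (x : GE) : bool :=
  all (fun S => gdegS deg S == g) (dom x).

(* cardinality in N u {oo} (None = infinity) of {i | P i} *)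
Definition has_card (P : nat -> Prop) (v : option nat) : Prop :=
  match v with
  | Some k => exists s : seq nat, [/\ uniq s, size s = k & forall i, P i <-> i \in s]
  | None => forall N : nat, exists i : nat, (N <= i)%N /\ P i
  end.

(* deg realizes the grading E^{(v1,v2,v3)}_{(r1,r2,r3)} *)
Definition is_grading3 (r1 r2 r3 : int) (v1 v2 v3 : option nat)
    (deg : nat -> int) : Prop :=
  [/\ forall i, deg i = r1 \/ deg i = r2 \/ deg i = r3,
      has_card (fun i => deg i = r1) v1,
      has_card (fun i => deg i = r2) v2 &
      has_card (fun i => deg i = r3) v3].

(* words in the variables x_i^g, encoded as (i, g) *)
Definition word (G : choiceType) := seq (nat * G).
Definition FA (G : choiceType) := {freeg (word G) / F}.

Definition famul (G : choiceType) (p q : FA G) : FA G :=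
  fglift (fun u => fglift (fun v => << (u ++ v : word G) >>) q) p.

Definition faone (G : choiceType) : FA G := << ([::] : word G) >>.

Definition favar (G : choiceType) (i : nat) (g : G) : FA G :=
  << ([:: (i, g)] : word G) >>.

Definition wdeg (w : word int) : int := \sum_(x <- w) x.2.

Definition fahomog (g : int) (p : FA int) : bool :=
  all (fun w => wdeg w == g) (dom p).

Definition fasubst (sigma : nat -> int -> FA int) (p : FA int) : FA int :=
  fglift (fun w => foldr (fun x acc => famul (sigma x.1 x.2) acc)
                         (faone int) w) p.

Definition graded_endo (sigma : nat -> int -> FA int) : Prop :=
  forall i g, fahomog g (sigma i g).

Definition is_TZideal (I : FA int -> Prop) : Prop :=
  [/\ I 0%R,
      forall p q, I p -> I q -> I (p + q)%R,
      forall (c : F) p, I p -> I (c *: p),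
      forall p h, I p -> I (famul h p) /\ I (famul p h) &
      forall sigma p, graded_endo sigma -> I p -> I (fasubst sigma p)].

Definition TZgen (S : FA int -> Prop) (f : FA int) : Prop :=
  forall I, is_TZideal I -> (forall g, S g -> I g) -> I f.

Definition evalE (a : nat -> int -> GE) (p : FA int) : GE :=
  fglift (fun w => foldr (fun x acc => gmul (a x.1 x.2) acc) gone w) p.

Definition TZ_E (deg : nat -> int) (f : FA int) : Prop :=
  forall a : nat -> int -> GE, (forall i g, ghomog deg g (a i g)) ->
    evalE a f = 0%R.

Definition dZ (d : int) := {z : int | (d %| z)%Z}.

Definition to_dZ (d n : int) : dZ d := exist _ (d * n) (dvdz_mulr n (dvdzz d)).

Definition Phi (d : int) (f : FA int) : FA (dZ d) :=
  fglift (fun w => << ([seq (x.1, to_dZ d x.2) | x <- w] : word (dZ d)) >>) f.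

Definition Psi (d : int) (f : FA (dZ d)) : FA int :=
  fglift (fun w => << ([seq (x.1, val x.2) | x <- w] : word int) >>) f.

End Defs.

Arguments Phi {F} d f.
Arguments Psi {F} d f.
Arguments favar {F G} i g.
Arguments TZ_E {F} deg f.

From HB Require Import structures.
From mathcomp Require Import all_boot all_order all_algebra.
From mathcomp Require Import finmap freeg zify.
Import Order.TTheory GRing.Theory.
Set Implicit Arguments. Unset Strict Implicit. Unset Printing Implicit Defensive.
Local Open Scope ring_scope.

(* All generator degrees of E_(-b,c,a) lie in dZ, and its three degree classes
   have the cardinalities of those of E_(-b',c',a'), whose degrees are d times
   smaller.  Injections between the generators respecting these classes, with
   e_i relabelled accordingly (and a sign restoring the order of the factors),
   give injective graded algebra maps in both directions; hence f is an
   identity of E_(-b',c',a') iff its dilation Psi_d (Phi_d f), which replaces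
   x_i^n by x_i^(dn), is an identity of E_(-b,c,a).  Every polynomial is a
   dilation plus a combination of monomials containing a variable of degree
   outside dZ; these lie in the ideal generated by N, and they are identities
   since E_(-b,c,a) has no nonzero element of such a degree. *)

Section FreegLift.
Variables (R : nzRingType) (K : choiceType).

Lemma freegUZ (k : R) (x : K) : << k *g x >> = k *: << x >>.
Proof. by apply/eqP/freeg_eqP => y; rewrite coeffZ !coeffU mul1r. Qed.

Lemma freeg_dom_ind (A : pred K) (P : {freeg K / R} -> Prop) :
  P 0 -> (forall k x D, A x -> P D -> P (k *: << x >> + D)) ->
  forall D, {subset dom D <= A} -> P D.
Proof.
move=> P0 PS D; rewrite -[D in P D]freeg_sumE.
elim: (dom D) => [|x s IH] sA; first by rewrite big_nil.
rewrite big_cons freegUZ; apply: PS; first exact/sA/mem_head.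
by apply: IH => y ys; apply: sA; rewrite inE ys orbT.
Qed.

Lemma freeg_ind (P : {freeg K / R} -> Prop) :
  P 0 -> (forall k x D, P D -> P (k *: << x >> + D)) -> forall D, P D.
Proof. by move=> P0 PS D; apply: (@freeg_dom_ind predT) => // k x D' _; apply: PS. Qed.

Variable M : lmodType R.
Implicit Types f : K -> M.

Lemma fglift_is_zmod_morphism f : zmod_morphism (fglift f).
Proof. exact: lift_is_additive. Qed.

HB.instance Definition _ f := GRing.isZmodMorphism.Build _ _ (fglift f)
  (fglift_is_zmod_morphism f).

Lemma fgliftU f x : fglift f << x >> = f x.
Proof. by rewrite liftU scale1r. Qed.

Lemma fgliftZ f (c : R) D : fglift f (c *: D) = c *: fglift f D.
Proof.
elim/freeg_ind: D => [|k x D IH]; first by rewrite scaler0 raddf0 scaler0.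
by rewrite scalerDr !raddfD /= IH scalerA -!freegUZ !liftU scalerA.
Qed.

End FreegLift.

Section DisjointUnion.
Variable K : choiceType.
Implicit Types S T : {fset K}.
Local Open Scope fset_scope.

Lemma perm_fsetU_disjoint S T : [disjoint S & T] ->
  perm_eq (enum_fset (S `|` T)) (enum_fset S ++ enum_fset T).
Proof.
move=> /fdisjointP dST; apply: uniq_perm; first exact: fset_uniq.
  rewrite cat_uniq !fset_uniq /= andbT; apply/hasPn => x xT.
  by apply/negP => /dST; rewrite xT.
by move=> x; rewrite mem_cat in_fsetU.
Qed.

Lemma big_fsetU_disjoint (R : Type) (idx : R) (op : Monoid.com_law idx)
    (F : K -> R) S T : [disjoint S & T] ->
  \big[op/idx]_(i <- enum_fset (S `|` T)) F i =
  op (\big[op/idx]_(i <- enum_fset S) F i) (\big[op/idx]_(i <- enum_fset T) F i).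
Proof. by move=> dST; rewrite (perm_big _ (perm_fsetU_disjoint dST)) big_cat. Qed.

End DisjointUnion.

Section Grassmann.
Variable F : fieldType.
Local Notation GE := (GE F).
Local Notation gmul := (@gmul F).
Local Notation gmono := (@gmono F).
Local Notation gone := (@gone F).
Local Open Scope fset_scope.
Local Open Scope ring_scope.
Implicit Types (S T U : {fset nat}) (x y z : GE).

Lemma ginvUl S T U : [disjoint S & T]%fset -> ginv (S `|` T) U = (ginv S U + ginv T U)%N.
Proof. exact: big_fsetU_disjoint. Qed.

Lemma ginvUr S T U : [disjoint T & U]%fset -> ginv S (T `|` U) = (ginv S T + ginv S U)%N.
Proof.
by move=> dTU; rewrite /ginv -big_split; apply: eq_bigr => s _; apply: big_fsetU_disjoint.
Qed.

Lemma ginv0l T : ginv fset0 T = 0%N.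
Proof. exact: big_seq_fset0. Qed.

Lemma ginv0r S : ginv S fset0 = 0%N.
Proof. by rewrite /ginv big1 // => s _; apply: big_seq_fset0. Qed.

Lemma gmonoE S T :
  gmono S T = if [disjoint S & T]%fset then (-1) ^+ ginv S T *: << S `|` T >> else 0.
Proof. by rewrite /gmono fsetI_eq0. Qed.

Lemma gmulDl z : {morph gmul^~ z : x y / x + y}.
Proof. by move=> x y; rewrite /gmul raddfD. Qed.

Lemma gmul0l z : gmul 0 z = 0.
Proof. by rewrite /gmul raddf0. Qed.

Lemma gmulZl c x z : gmul (c *: x) z = c *: gmul x z.
Proof. by rewrite /gmul fgliftZ. Qed.

Lemma gmulUl S z : gmul << S >> z = fglift (gmono S) z.
Proof. by rewrite /gmul fgliftU. Qed.

Lemma gmulUU S T : gmul << S >> << T >> = gmono S T.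
Proof. by rewrite gmulUl fgliftU. Qed.

Lemma gmulDr x : {morph gmul x : y z / y + z}.
Proof.
move=> y z; elim/freeg_ind: x => [|k S D IH]; first by rewrite !gmul0l addr0.
by rewrite !gmulDl !gmulZl !gmulUl IH !raddfD /= ?scalerDr addrACA.
Qed.

Lemma gmul0r x : gmul x 0 = 0.
Proof.
elim/freeg_ind: x => [|k S D IH]; first by rewrite gmul0l.
by rewrite gmulDl gmulZl gmulUl IH raddf0 scaler0 addr0.
Qed.

Lemma gmulZr c x y : gmul x (c *: y) = c *: gmul x y.
Proof.
elim/freeg_ind: x => [|k S D IH]; first by rewrite !gmul0l scaler0.
by rewrite !gmulDl !gmulZl !gmulUl IH fgliftZ scalerDr !scalerA mulrC.
Qed.

Lemma gmonoA S T U : gmul (gmono S T) << U >> = gmul << S >> (gmono T U).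
Proof.
rewrite !gmonoE; have [dST|dST] := boolP [disjoint S & T]%fset; last first.
  rewrite gmul0l; case: ifP => dTU; last by rewrite gmul0r.
  by rewrite gmulZr gmulUU gmonoE fdisjointXU (negbTE dST) scaler0.
rewrite gmulZl gmulUU gmonoE fdisjointUX.
have [dTU|dTU] := boolP [disjoint T & U]%fset; last by rewrite gmul0r andbF scaler0.
rewrite gmulZr gmulUU gmonoE fdisjointXU dST andbT.
case: ifP => dSU; last by rewrite !scaler0.
rewrite !scalerA fsetUA ginvUl // ginvUr // !exprD; congr (_ *: _).
by rewrite !mulrA mulrC mulrA.
Qed.

Lemma gmulA x y z : gmul (gmul x y) z = gmul x (gmul y z).
Proof.
elim/freeg_ind: x => [|k S D IH]; first by rewrite !gmul0l.
rewrite !gmulDl !gmulZl IH; congr (_ *: _ + _); clear IH D.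
elim/freeg_ind: y => [|k' T D IH]; first by rewrite gmul0r !gmul0l gmul0r.
rewrite !(gmulDr, gmulDl, gmulZr, gmulZl) IH; congr (_ *: _ + _); clear IH D.
rewrite gmulUU; elim/freeg_ind: z => [|k'' U D IH]; first by rewrite !gmul0r.
by rewrite !(gmulDr, gmulZr) IH gmonoA gmulUU.
Qed.

Lemma gmul1l x : gmul gone x = x.
Proof.
rewrite gmulUl; elim/freeg_ind: x => [|k T D IH]; first by rewrite raddf0.
by rewrite raddfD /= fgliftZ fgliftU IH gmonoE fdisjoint0X ginv0l fset0U scale1r.
Qed.

Lemma gmul1r x : gmul x gone = x.
Proof.
elim/freeg_ind: x => [|k S D IH]; first by rewrite gmul0l.
by rewrite gmulDl gmulZl IH gmulUU gmonoE fdisjointX0 ginv0r fsetU0 scale1r.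
Qed.

End Grassmann.

Section Homogeneous.
Variables (R : nzRingType) (K : choiceType) (wt : K -> int).
Implicit Types x y : {freeg K / R}.

Definition homog (g : int) x := all (fun S => wt S == g) (dom x).

Lemma homog_ind g (P : {freeg K / R} -> Prop) :
  P 0 -> (forall k S D, wt S = g -> P D -> P (k *: << S >> + D)) ->
  forall x, homog g x -> P x.
Proof.
move=> P0 PS x /allP hx; apply: (@freeg_dom_ind _ _ (fun S => wt S == g)) => //.
by move=> k S D /eqP; apply: PS.
Qed.

Lemma homog0 g : homog g 0.
Proof. by rewrite /homog dom0. Qed.

Lemma homogD g x y : homog g x -> homog g y -> homog g (x + y).
Proof.
move=> /allP hx /allP hy; apply/allP => S /domD_subset.
by rewrite mem_cat => /orP[/hx|/hy].
Qed.

Lemma homogZ g c x : homog g x -> homog g (c *: x).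
Proof. by move=> /allP hx; apply/allP => S /domZ_subset /hx. Qed.

Lemma homogU g S : wt S = g -> homog g << S >>.
Proof. by move=> wtS; rewrite /homog domU1 /= wtS eqxx. Qed.

Lemma homog_eq0 g x : (forall S, wt S != g) -> homog g x -> x = 0.
Proof.
move=> wtN; move: x; apply: homog_ind => // k S D wtS.
by have := wtN S; rewrite wtS eqxx.
Qed.

End Homogeneous.

Lemma gdegSU (deg : nat -> int) (S T : {fset nat}) : [disjoint S & T]%fset ->
  gdegS deg (S `|` T)%fset = gdegS deg S + gdegS deg T.
Proof. exact: big_fsetU_disjoint. Qed.

Lemma gdegS0 (deg : nat -> int) : gdegS deg fset0 = 0.
Proof. exact: big_seq_fset0. Qed.

Lemma dvdz_gdegS (deg : nat -> int) (d : int) :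
  (forall i, (d %| deg i)%Z) -> forall S, (d %| gdegS deg S)%Z.
Proof.
move=> dvd_deg S; rewrite /gdegS.
by apply: (big_ind (fun m => d %| m)%Z) => [|m n|i _]; [exact: dvdz0|exact: rpredD|exact: dvd_deg].
Qed.

Lemma ghomog_mul F deg g h (x y : GE F) :
  ghomog deg g x -> ghomog deg h y -> ghomog deg (g + h) (gmul x y).
Proof.
move=> + hy.
move: x; apply: homog_ind => [|k S D degS hD]; first by rewrite gmul0l; apply: homog0.
rewrite gmulDl gmulZl; apply: homogD hD; apply: homogZ.
move: y hy; apply: homog_ind => [|k' T D' degT hD']; first by rewrite gmul0r; apply: homog0.
rewrite gmulDr gmulZr; apply: homogD hD'; apply: homogZ.
rewrite gmulUU gmonoE; case: ifP => dST; last exact: homog0.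
by apply/homogZ/homogU; rewrite gdegSU // degS degT.
Qed.

Lemma ghomog_one F deg : ghomog deg 0 (gone F).
Proof. exact/homogU/gdegS0. Qed.

Section FreeAlgebra.
Variables (F : fieldType) (G : choiceType).
Local Notation FA := (FA F G).
Local Notation famul := (@famul F G).
Implicit Types x y z : FA.

Lemma famulDl z : {morph famul^~ z : x y / x + y}.
Proof. by move=> x y; rewrite /famul raddfD. Qed.

Lemma famul0l z : famul 0 z = 0.
Proof. by rewrite /famul raddf0. Qed.

Lemma famulZl c x z : famul (c *: x) z = c *: famul x z.
Proof. by rewrite /famul fgliftZ. Qed.

Lemma famulUl u z : famul << u >> z = fglift (fun v => << (u ++ v : word G) >>) z.
Proof. by rewrite /famul fgliftU. Qed.

Lemma famulUU u v : famul << u >> << v >> = << (u ++ v : word G) >>.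
Proof. by rewrite famulUl fgliftU. Qed.

Lemma famulDr x : {morph famul x : y z / y + z}.
Proof.
move=> y z; elim/freeg_ind: x => [|k u D IH]; first by rewrite !famul0l addr0.
by rewrite !famulDl !famulZl !famulUl IH !raddfD /= ?scalerDr addrACA.
Qed.

Lemma famul0r x : famul x 0 = 0.
Proof.
elim/freeg_ind: x => [|k u D IH]; first by rewrite famul0l.
by rewrite famulDl famulZl famulUl IH raddf0 scaler0 addr0.
Qed.

Lemma famulZr c x y : famul x (c *: y) = c *: famul x y.
Proof.
elim/freeg_ind: x => [|k u D IH]; first by rewrite !famul0l scaler0.
by rewrite !famulDl !famulZl !famulUl IH fgliftZ scalerDr !scalerA mulrC.
Qed.

End FreeAlgebra.

Lemma favar_homog F (i : nat) (m : int) : fahomog m (favar i m : FA F int).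
Proof. by apply: homogU; rewrite /wdeg big_seq1. Qed.

Section Evaluation.
Variable F : fieldType.
Local Notation GE := (GE F).
Local Notation gmul := (@gmul F).
Local Notation gone := (@gone F).
Local Notation FA := (FA F int).
Implicit Types (a b : nat -> int -> GE) (p q : FA).

Definition evalw a (w : word int) : GE :=
  foldr (fun x acc => gmul (a x.1 x.2) acc) gone w.

Lemma evalEU a w : evalE a << w >> = evalw a w.
Proof. by rewrite /evalE fgliftU. Qed.

Lemma evalE0 a : evalE a 0 = 0.
Proof. by rewrite /evalE raddf0. Qed.

Lemma evalED a : {morph evalE a : p q / p + q}.
Proof. by move=> p q; rewrite /evalE raddfD. Qed.

Lemma evalEZ a c p : evalE a (c *: p) = c *: evalE a p.
Proof. by rewrite /evalE fgliftZ. Qed.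

Lemma eq_evalE a b p : (forall i g, a i g = b i g) -> evalE a p = evalE b p.
Proof.
move=> eq_ab; elim/freeg_ind: p => [|k w D IH]; first by rewrite !evalE0.
rewrite !(evalED, evalEZ, evalEU) IH; congr (_ *: _ + _).
by elim: w => [|x w IHw] //=; rewrite IHw eq_ab.
Qed.

Lemma evalw_cat a u v : evalw a (u ++ v) = gmul (evalw a u) (evalw a v).
Proof. by elim: u => [|x u IH] /=; rewrite ?gmul1l // IH gmulA. Qed.

Lemma evalE_mul a p q : evalE a (famul p q) = gmul (evalE a p) (evalE a q).
Proof.
elim/freeg_ind: p => [|k u D IH]; first by rewrite famul0l evalE0 gmul0l.
rewrite famulDl famulZl !(evalED, evalEZ) IH gmulDl gmulZl; congr (_ *: _ + _).
clear IH D; elim/freeg_ind: q => [|k' v D IH]; first by rewrite famul0r evalE0 gmul0r.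
rewrite famulDr famulZr !(evalED, evalEZ) IH gmulDr gmulZr.
by rewrite famulUU !evalEU evalw_cat.
Qed.

Lemma evalE_one a : evalE a (faone F int) = gone.
Proof. exact: evalEU. Qed.

Lemma evalE_var a i g : evalE a (favar i g) = a i g.
Proof. by rewrite evalEU /= gmul1r. Qed.

Lemma evalE_subst a sigma p :
  evalE a (fasubst sigma p) = evalE (fun i g => evalE a (sigma i g)) p.
Proof.
elim/freeg_ind: p => [|k w D IH]; first by rewrite /fasubst raddf0 !evalE0.
rewrite /fasubst raddfD /= fgliftZ -/(fasubst sigma D) !(evalED, evalEZ) IH.
rewrite fgliftU evalEU; congr (_ *: _ + _).
by elim: w => [|x w IHw] /=; rewrite ?evalE_one // evalE_mul IHw.
Qed.

Lemma ghomog_evalE deg a g p : (forall i h, ghomog deg h (a i h)) ->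
  fahomog g p -> ghomog deg g (evalE a p).
Proof.
move=> ha; move: p; apply: homog_ind => [|k w D wdeg_w hD].
  by rewrite evalE0; apply: homog0.
rewrite evalED evalEZ; apply: homogD hD; apply: homogZ; rewrite evalEU -wdeg_w.
elim: w {wdeg_w} => [|x w IHw] /=; first by rewrite /wdeg big_nil; apply: ghomog_one.
by rewrite /wdeg big_cons; apply: ghomog_mul.
Qed.

Lemma TZ_E_is_TZideal deg : is_TZideal (TZ_E (F := F) deg).
Proof.
split.
- by move=> a _; rewrite evalE0.
- by move=> p q hp hq a ha; rewrite evalED hp // hq // addr0.
- by move=> c p hp a ha; rewrite evalEZ hp // scaler0.
- by move=> p h hp; split=> a ha; rewrite evalE_mul hp // (gmul0r, gmul0l).
- move=> sigma p hsigma hp a ha; rewrite evalE_subst; apply: hp => i g.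
  exact: ghomog_evalE.
Qed.

End Evaluation.

Section GeneratedIdeal.
Variables (F : fieldType) (S : FA F int -> Prop).

Lemma TZgen_is_TZideal : is_TZideal (TZgen S).
Proof.
split.
- by move=> I [].
- by move=> p q hp hq I hI hS; case: (hI) => _ + _ _ _; apply; [apply: hp|apply: hq].
- by move=> c p hp I hI hS; case: (hI) => _ _ + _ _; apply; apply: hp.
- by move=> p h hp; split=> I hI hS; case: (hI) => _ _ _ /(_ p h (hp I hI hS)) [].
- by move=> sigma p hs hp I hI hS; case: (hI) => _ _ _ _ + ; apply => //; apply: hp.
Qed.

Lemma mem_TZgen g : S g -> TZgen S g.
Proof. by move=> Sg I _; apply. Qed.

End GeneratedIdeal.

Section Relabel.
Variables (F : fieldType) (pi : nat -> nat).
Hypothesis pi_inj : injective pi.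
Local Notation GE := (GE F).
Local Notation gmul := (@gmul F).
Local Notation gmono := (@gmono F).
Local Open Scope fset_scope.
Local Open Scope ring_scope.
Implicit Types (S T : {fset nat}) (x y : GE).

Definition pi_inv S T : nat :=
  \sum_(s <- enum_fset S) \sum_(t <- enum_fset T) ((s < t) && (pi t < pi s))%N.

(* Relabelling reorders the factors of [e_S]; the sign compensates, so that
   [relabel] is multiplicative. *)
Definition relabel_sign S : F := (-1) ^+ pi_inv S S.

Definition relabel x : GE := fglift (fun S => relabel_sign S *: << pi @` S >>) x.

Lemma perm_enum_imfset S : perm_eq (enum_fset (pi @` S)) (map pi (enum_fset S)).
Proof.
apply: uniq_perm; first exact: fset_uniq.
  by rewrite (map_inj_uniq pi_inj) fset_uniq.
by move=> x; apply/imfsetP/mapP => -[y yS ->]; exists y.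
Qed.

Lemma mem_imfset_pi S s : (pi s \in pi @` S) = (s \in S).
Proof. exact: mem_imfset. Qed.

Lemma imfset_pi_inj : injective (fun S => pi @` S).
Proof. by move=> S T eST; apply/fsetP => s; rewrite -(mem_imfset_pi S) /= eST mem_imfset_pi. Qed.

Lemma fdisjoint_imfset S T : [disjoint pi @` S & pi @` T] = [disjoint S & T].
Proof.
apply/fdisjointP/fdisjointP => dST x.
  by move=> xS; rewrite -(mem_imfset_pi T); apply: dST; rewrite mem_imfset_pi.
by case/imfsetP => y yS ->; rewrite mem_imfset_pi; apply: dST.
Qed.

Lemma ginv_imfset S T : ginv (pi @` S) (pi @` T) =
  (\sum_(s <- enum_fset S) \sum_(t <- enum_fset T) (pi t < pi s))%N.
Proof.
rewrite /ginv (perm_big _ (perm_enum_imfset S)) big_map; apply: eq_bigr => s _.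
by rewrite (perm_big _ (perm_enum_imfset T)) big_map.
Qed.

Lemma pi_invU S T : [disjoint S & T] ->
  pi_inv (S `|` T) (S `|` T) = (pi_inv S S + pi_inv T T + pi_inv S T + pi_inv T S)%N.
Proof.
move=> dST; rewrite /pi_inv big_fsetU_disjoint //.
rewrite !(eq_bigr _ (fun s _ => big_fsetU_disjoint _ _ dST)) /= !big_split /=.
lia.
Qed.

Lemma inversion_parity (s t : nat) : s != t ->
  ((t < s) + ((s < t) && (pi t < pi s)) + ((t < s) && (pi s < pi t)) =
   (pi t < pi s) + 2 * ((t < s) && (pi s < pi t)))%N.
Proof.
move=> neq_st; have neq_pi : pi s != pi t by apply: contra neq_st => /eqP /pi_inj ->.
case: (ltngtP s t) => [|| eq_st]; last by rewrite eq_st eqxx in neq_st.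
all: case: (ltngtP (pi s) (pi t)) => [|| eq_pi]; last by rewrite eq_pi eqxx in neq_pi.
all: by [].
Qed.

Lemma relabel_signU S T : [disjoint S & T] ->
  (-1) ^+ ginv S T * relabel_sign (S `|` T) =
  relabel_sign S * relabel_sign T * (-1) ^+ ginv (pi @` S) (pi @` T).
Proof.
move=> dST; rewrite /relabel_sign pi_invU // ginv_imfset -!exprD.
set Y := (\sum_(s <- enum_fset S) \sum_(t <- enum_fset T)
            ((t < s) && (pi s < pi t)))%N.
(* Summing [inversion_parity] over the pairs of [S x T]. *)
have parity : (ginv S T + pi_inv S T + pi_inv T S =
   (\sum_(s <- enum_fset S) \sum_(t <- enum_fset T) (pi t < pi s)) + 2 * Y)%N.
  have -> : pi_inv T S = Y by rewrite /pi_inv exchange_big.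
  rewrite /ginv /pi_inv -!big_split /Y big_distrr -big_split /= !big_seq.
  apply: eq_bigr => s sS; rewrite -!big_split big_distrr -big_split /= !big_seq.
  apply: eq_bigr => t tT; apply: inversion_parity; apply: contraTneq tT => <-.
  exact: (fdisjointP dST).
have -> : (ginv S T + (pi_inv S S + pi_inv T T + pi_inv S T + pi_inv T S) =
   pi_inv S S + pi_inv T T + (ginv S T + pi_inv S T + pi_inv T S))%N by lia.
by rewrite parity addnA exprD exprM sqrrN !expr1n mulr1.
Qed.

Lemma relabelD : {morph relabel : x y / x + y}.
Proof. by move=> x y; rewrite /relabel raddfD. Qed.

Lemma relabel0 : relabel 0 = 0.
Proof. by rewrite /relabel raddf0. Qed.

Lemma relabelZ c x : relabel (c *: x) = c *: relabel x.
Proof. by rewrite /relabel fgliftZ. Qed.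

Lemma relabelU S : relabel << S >> = relabel_sign S *: << pi @` S >>.
Proof. by rewrite /relabel fgliftU. Qed.

Lemma relabel_gmono S T : relabel (gmono S T) = gmul (relabel << S >>) (relabel << T >>).
Proof.
rewrite !relabelU gmulZl gmulZr gmulUU !gmonoE fdisjoint_imfset.
case: ifP => dST; last by rewrite relabel0 !scaler0.
rewrite relabelZ relabelU !scalerA imfsetU; congr (_ *: _).
by rewrite relabel_signU // mulrC.
Qed.

Lemma relabel_mul x y : relabel (gmul x y) = gmul (relabel x) (relabel y).
Proof.
elim/freeg_ind: x => [|k S D IH]; first by rewrite gmul0l relabel0 gmul0l.
rewrite gmulDl gmulZl !(relabelD, relabelZ) IH gmulDl gmulZl; congr (_ *: _ + _).
clear IH D; elim/freeg_ind: y => [|k' T D IH]; first by rewrite gmul0r relabel0 gmul0r.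
rewrite gmulDr gmulZr !(relabelD, relabelZ) IH gmulDr gmulZr; congr (_ *: _ + _).
by rewrite gmulUU relabel_gmono.
Qed.

Lemma relabel_one : relabel (gone F) = gone F.
Proof. by rewrite relabelU imfset0 /relabel_sign /pi_inv big_seq_fset0 scale1r. Qed.

Lemma relabel_evalE (a : nat -> int -> GE) p :
  relabel (evalE a p) = evalE (fun i g => relabel (a i g)) p.
Proof.
elim/freeg_ind: p => [|k w D IH]; first by rewrite !evalE0 relabel0.
rewrite !(evalED, evalEZ) relabelD relabelZ IH !evalEU; congr (_ *: _ + _).
by elim: w => [|x w IHw] /=; rewrite ?relabel_one // relabel_mul IHw.
Qed.

Lemma coeff_relabel S x : coeff (pi @` S) (relabel x) = relabel_sign S * coeff S x.
Proof.
elim/freeg_ind: x => [|k T D IH]; first by rewrite relabel0 !coeff0 mulr0.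
rewrite relabelD relabelZ relabelU !(coeffD, coeffZ) IH !coeffU mulrDr; congr (_ + _).
have [->|neq_TS] := eqVneq T S; first by rewrite !eqxx mulrCA.
rewrite (inj_eq imfset_pi_inj) (negbTE neq_TS).
by rewrite !mulr0.
Qed.

Lemma relabel_eq0 x : relabel x = 0 -> x = 0.
Proof.
move=> x0; apply/eqP/freeg_eqP => S; have := coeff_relabel S x.
by rewrite x0 coeff0 => /esym /eqP; rewrite mulf_eq0 signr_eq0 coeff0 => /eqP.
Qed.

Lemma relabel_homog (deg1 deg2 : nat -> int) (c c' g g' : int) x :
  c != 0 -> (forall s, c * deg2 (pi s) = c' * deg1 s) -> c * g' = c' * g ->
  ghomog deg1 g x -> ghomog deg2 g' (relabel x).
Proof.
move=> c_neq0 hdeg hg; move: x; apply: homog_ind => [|k S D degS hD].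
  by rewrite relabel0; apply: homog0.
rewrite relabelD relabelZ; apply: homogD hD; apply: homogZ.
rewrite relabelU; apply/homogZ/homogU; apply: (mulfI c_neq0).
rewrite /gdegS (perm_big _ (perm_enum_imfset S)) big_map big_distrr /=.
by rewrite (eq_bigr _ (fun s _ => hdeg s)) -big_distrr /= hg -degS.
Qed.

End Relabel.

Section Dilate.
Variables (F : fieldType) (d : int).
Local Notation FA := (FA F int).
Local Notation famul := (@famul F int).
Implicit Types (f p q : FA) (w : word int).

Definition dilate_word w : word int := [seq (x.1, d * x.2) | x <- w].

Definition dilate p : FA := fglift (fun w => << dilate_word w >>) p.

Lemma dilateD : {morph dilate : p q / p + q}.
Proof. by move=> p q; rewrite /dilate raddfD. Qed.

Lemma dilate0 : dilate 0 = 0.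
Proof. by rewrite /dilate raddf0. Qed.

Lemma dilateZ c p : dilate (c *: p) = c *: dilate p.
Proof. by rewrite /dilate fgliftZ. Qed.

Lemma dilateU w : dilate << w >> = << dilate_word w >>.
Proof. by rewrite /dilate fgliftU. Qed.

Lemma PsiPhiE f : Psi d (Phi d f) = dilate f.
Proof.
elim/freeg_ind: f => [|k w D IH]; first by rewrite /Psi /Phi !raddf0 dilate0.
rewrite /Psi /Phi !raddfD /= !fgliftZ -/(Phi d D) -/(Psi d (Phi d D)) IH.
by rewrite dilateD dilateZ dilateU !fgliftU -map_comp.
Qed.

Lemma dilate_mul p q : dilate (famul p q) = famul (dilate p) (dilate q).
Proof.
elim/freeg_ind: p => [|k u D IH]; first by rewrite famul0l dilate0 famul0l.
rewrite famulDl famulZl !(dilateD, dilateZ) IH famulDl famulZl; congr (_ *: _ + _).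
clear IH D; elim/freeg_ind: q => [|k' v D IH]; first by rewrite famul0r dilate0 famul0r.
rewrite famulDr famulZr !(dilateD, dilateZ) IH famulDr famulZr; congr (_ *: _ + _).
by rewrite famulUU !dilateU famulUU /dilate_word map_cat.
Qed.

Lemma dilate_one : dilate (faone F int) = faone F int.
Proof. exact: dilateU. Qed.

Lemma fahomog_dilate g p : fahomog g p -> fahomog (d * g) (dilate p).
Proof.
move: p; apply: homog_ind => [|k w D wdeg_w hD]; first by rewrite dilate0; apply: homog0.
rewrite dilateD dilateZ; apply: homogD hD; apply: homogZ; rewrite dilateU.
by apply: homogU; rewrite /wdeg /dilate_word big_map -big_distrr -wdeg_w.
Qed.

Lemma evalE_dilate (b : nat -> int -> GE F) f :
  evalE b (dilate f) = evalE (fun i n => b i (d * n)) f.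
Proof.
elim/freeg_ind: f => [|k w D IH]; first by rewrite dilate0 !evalE0.
rewrite dilateD dilateZ !(evalED, evalEZ) IH dilateU !evalEU; congr (_ *: _ + _).
by elim: w => [|x w IHw] //=; rewrite IHw.
Qed.

Definition dvd_word w := all (fun x => (d %| x.2)%Z) w.

Definition undilate_word w : word int := [seq (x.1, (x.2 %/ d)%Z) | x <- w].

Definition undilate f : FA :=
  fglift (fun w => if dvd_word w then << undilate_word w >> else 0) f.

Definition nondvd_part f : FA := fglift (fun w => if dvd_word w then 0 else << w >>) f.

Lemma dilate_undilate_word w : dvd_word w -> dilate_word (undilate_word w) = w.
Proof.
elim: w => [|[i m] w IH] //= /andP [dvd_m dvd_w].
by rewrite IH // mulrC divzK.
Qed.

Lemma undilate_decomp f : f = dilate (undilate f) + nondvd_part f.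
Proof.
elim/freeg_ind: f => [|k w D IH]; first by rewrite /undilate /nondvd_part !raddf0 dilate0 addr0.
rewrite /undilate /nondvd_part !raddfD /= !fgliftZ -/(undilate D) -/(nondvd_part D).
rewrite dilateD dilateZ addrACA -IH !fgliftU -scalerDr.
case: ifP => dvd_w; last by rewrite dilate0 add0r.
by rewrite dilateU addr0 dilate_undilate_word.
Qed.

Lemma nondvd_part_TZgen (G : FA -> Prop) f :
  (forall i m, ~~ (d %| m)%Z -> G (favar i m)) -> TZgen G (nondvd_part f).
Proof.
move=> Gvar I hI GI; case: (hI) => I0 ID IZ IM _.
elim/freeg_ind: f => [|k w D IH]; first by rewrite /nondvd_part raddf0.
rewrite /nondvd_part raddfD /= fgliftZ -/(nondvd_part D); apply: ID => //; apply: IZ.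
rewrite fgliftU; case: ifP => // /negbT.
elim: w => [|[i m] w IHw] //; rewrite /dvd_word /= negb_and.
have -> : << (i, m) :: w >> = famul (favar i m) << w >> by rewrite famulUU.
case/orP => [ndvd_m|ndvd_w].
  by case: (IM _ << w >> (GI _ (Gvar i m ndvd_m))).
by case: (IM _ (favar i m) (IHw ndvd_w)).
Qed.

Hypothesis d_neq0 : d != 0.

(* Variables of degree outside [dZ] do not occur in dilated polynomials, so
   their image [favar i m] is arbitrary. *)
Definition dilate_endo (sigma : nat -> int -> FA) i m : FA :=
  if (d %| m)%Z then dilate (sigma i (m %/ d)%Z) else favar i m.

Lemma dilate_subst sigma p :
  dilate (fasubst sigma p) = fasubst (dilate_endo sigma) (dilate p).
Proof.
elim/freeg_ind: p => [|k w D IH]; first by rewrite /fasubst !raddf0 dilate0 raddf0.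
rewrite /fasubst raddfD /= fgliftZ -/(fasubst sigma D) dilateD dilateZ IH.
rewrite dilateD dilateZ /fasubst raddfD /= fgliftZ; congr (_ *: _ + _).
rewrite fgliftU dilateU fgliftU; elim: w => [|x w IHw] /=; first exact: dilate_one.
by rewrite dilate_mul IHw /dilate_endo dvdz_mulr ?dvdzz // mulKz.
Qed.

Lemma graded_dilate_endo sigma : graded_endo sigma -> graded_endo (dilate_endo sigma).
Proof.
move=> hsigma i m; rewrite /dilate_endo; case: ifP => [dvd_m|_]; last exact: favar_homog.
by rewrite -[m in fahomog m](divzK dvd_m) mulrC; apply/fahomog_dilate/hsigma.
Qed.

Lemma TZgen_dilate (S G : FA -> Prop) :
  (forall s, S s -> TZgen G (dilate s)) -> forall g, TZgen S g -> TZgen G (dilate g).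
Proof.
move=> SG g Sg; apply: (Sg (fun h => TZgen G (dilate h))) SG.
have [G0 GD GZ GM Gsubst] := TZgen_is_TZideal G.
split.
- by rewrite dilate0.
- by move=> p q hp hq; rewrite dilateD; apply: GD.
- by move=> c p hp; rewrite dilateZ; apply: GZ.
- by move=> p h hp; rewrite !dilate_mul; apply: GM.
- move=> sigma p hsigma hp; rewrite dilate_subst.
  by apply: Gsubst => //; apply: graded_dilate_endo.
Qed.

End Dilate.

Section CountBelow.
Variable P : pred nat.

Definition count_lt n := count P (iota 0 n).

Lemma count_ltS n : count_lt n.+1 = (count_lt n + P n)%N.
Proof. by rewrite /count_lt -addn1 iotaD count_cat /= addn0. Qed.

Lemma leq_count_lt m n : (m <= n)%N -> (count_lt m <= count_lt n)%N.
Proof.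
move=> /subnKC <-; elim: (n - m)%N => [|k IH]; first by rewrite addn0.
by rewrite addnS count_ltS (leq_trans IH) // leq_addr.
Qed.

Lemma count_lt_ltn i j : (i < j)%N -> P i -> (count_lt i < count_lt j)%N.
Proof.
move=> lt_ij Pi; apply: (@leq_trans (count_lt i.+1)); last exact: leq_count_lt.
by rewrite count_ltS Pi addn1.
Qed.

Lemma count_lt_attained r M : (r < count_lt M)%N -> exists2 m, P m & count_lt m = r.
Proof.
elim: M => [|M IH] //; rewrite count_ltS.
have [lt_r|le_r] := ltnP r (count_lt M); first by move=> _; apply: IH.
case PM: (P M) => /= lt_r'; last by lia.
by exists M => //; lia.
Qed.

Lemma count_lt_le_size (s : seq nat) n : (forall i, P i -> i \in s) ->
  (count_lt n <= size s)%N.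
Proof.
move=> Ps; rewrite /count_lt -size_filter; apply: uniq_leq_size.
  exact/filter_uniq/iota_uniq.
by move=> x; rewrite mem_filter => /andP [/Ps].
Qed.

Lemma count_lt_ge_size (s : seq nat) : uniq s -> (forall i, i \in s -> P i) ->
  exists M, (size s <= count_lt M)%N.
Proof.
move=> uniq_s sP; exists (sumn s).+1; rewrite /count_lt -size_filter.
apply: uniq_leq_size => // x xs; rewrite mem_filter sP // mem_iota add0n ltnS /=.
elim: s {uniq_s sP} xs => [|y s IH] //=; rewrite inE => /orP [/eqP ->|/IH].
  exact: leq_addr.
by move=> le_x; apply: leq_trans le_x (leq_addl _ _).
Qed.

Lemma count_lt_unbounded : (forall N, exists i, (N <= i)%N /\ P i) ->
  forall r, exists M, (r < count_lt M)%N.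
Proof.
move=> Pinf; elim=> [|r [M ltrM]].
  by have [m [_ Pm]] := Pinf 0%N; exists m.+1; rewrite count_ltS Pm addn1.
have [m [leMm Pm]] := Pinf M; exists m.+1; rewrite count_ltS Pm addn1 ltnS.
exact: leq_trans ltrM (leq_count_lt leMm).
Qed.

End CountBelow.

Lemma eq_has_card (P Q : nat -> Prop) v :
  (forall i, P i <-> Q i) -> has_card P v -> has_card Q v.
Proof.
move=> PQ; case: v => [k [s [uniq_s size_s Ps]]|Pinf N].
  by exists s; split => // i; rewrite -PQ.
by have [i [leNi /PQ Qi]] := Pinf N; exists i.
Qed.

Lemma has_card_count_lt (P Q : pred nat) v i :
  has_card (fun j => P j) v -> has_card (fun j => Q j) v -> P i ->
  exists M, (count_lt P i < count_lt Q M)%N.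
Proof.
case: v => [k [s [uniq_s size_s Ps]] [t [uniq_t size_t Qt]]|Pinf Qinf] Pi.
  have [M leM] := @count_lt_ge_size Q t uniq_t (fun m => (Qt m).2).
  exists M; apply: leq_trans leM; rewrite size_t -size_s.
  by have := @count_lt_le_size P s i.+1 (fun j => (Ps j).1); rewrite count_ltS Pi addn1.
exact: count_lt_unbounded.
Qed.

(* [pi i] is the element of the target class whose rank in its class is the
   rank of [i] in its own class. *)
Lemma exists_class_injection (deg1 deg2 : nat -> int) (f : int -> int) :
  (forall i j, f (deg1 i) = f (deg1 j) -> deg1 i = deg1 j) ->
  (forall i, exists v, has_card (fun j => deg1 j = deg1 i) v /\
                       has_card (fun m => deg2 m = f (deg1 i)) v) ->
  exists2 pi : nat -> nat, injective pi & forall i, deg2 (pi i) = f (deg1 i).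
Proof.
move=> f_inj hcard.
pose P i := [pred j | deg1 j == deg1 i].
pose Q i := [pred m | deg2 m == f (deg1 i)].
have rank_match i : exists m, Q i m && (count_lt (Q i) m == count_lt (P i) i).
  have [v [hP hQ]] := hcard i.
  have hP' : has_card (fun j => P i j) v by apply: eq_has_card hP => j; split => /eqP.
  have hQ' : has_card (fun m => Q i m) v by apply: eq_has_card hQ => m; split => /eqP.
  have [M ltM] := has_card_count_lt hP' hQ' (eqxx (deg1 i)).
  by have [m Qm rankm] := count_lt_attained ltM; exists m; rewrite Qm rankm eqxx.
exists (fun i => ex_minn (rank_match i)); last first.
  by move=> i; case: ex_minnP => m /andP [/eqP -> _].
move=> i j; case: ex_minnP => m /andP [Qim /eqP rank_i] _.
case: ex_minnP => m' /andP [Qjm /eqP rank_j] _ eq_mm'; subst m'.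
have deg_ij : deg1 i = deg1 j by apply: f_inj; rewrite -(eqP Qim) (eqP Qjm).
have eQ : Q j = Q i by rewrite /Q deg_ij.
have eP : P j = P i by rewrite /P deg_ij.
move: rank_j; rewrite eQ eP rank_i => eq_rank.
have Pii : P i i by rewrite /=.
have Pij : P i j by rewrite /= deg_ij.
case: (ltngtP i j) => // [lt_ij|lt_ji].
  by have := count_lt_ltn lt_ij Pii; rewrite eq_rank ltnn.
by have := count_lt_ltn lt_ji Pij; rewrite eq_rank ltnn.
Qed.

Lemma grading3_injection (f : int -> int) r1 r2 r3 v1 v2 v3 (deg1 deg2 : nat -> int) :
  {in [:: r1; r2; r3] &, injective f} ->
  is_grading3 r1 r2 r3 v1 v2 v3 deg1 ->
  is_grading3 (f r1) (f r2) (f r3) v1 v2 v3 deg2 ->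
  exists2 pi : nat -> nat, injective pi & forall i, deg2 (pi i) = f (deg1 i).
Proof.
move=> f_inj [deg1E c1 c2 c3] [_ c1' c2' c3'].
have deg1_in i : deg1 i \in [:: r1; r2; r3].
  by case: (deg1E i) => [->|[->|->]]; rewrite !inE eqxx ?orbT.
apply: exists_class_injection => [i j|i]; first exact: f_inj.
by case: (deg1E i) => [->|[->|->]]; eexists; split; eassumption.
Qed.

Lemma grading3_dvd (d : int) r1 r2 r3 v1 v2 v3 (deg : nat -> int) :
  is_grading3 (d * r1) (d * r2) (d * r3) v1 v2 v3 deg -> forall i, (d %| deg i)%Z.
Proof. by case=> degE _ _ _ i; case: (degE i) => [->|[->|->]]; apply: dvdz_mulr. Qed.

Section Transfer.
Variables (F : fieldType) (d : int) (deg deg' : nat -> int).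
Hypothesis d_neq0 : d != 0.

Lemma TZ_E_dilate (pi : nat -> nat) : injective pi ->
  (forall s, deg s = d * deg' (pi s)) ->
  forall f : FA F int, TZ_E deg' f -> TZ_E deg (dilate d f).
Proof.
move=> pi_inj hpi f hf b hb; rewrite evalE_dilate; apply: (relabel_eq0 pi_inj).
rewrite (relabel_evalE pi_inj); apply: hf => i n.
apply: (relabel_homog pi_inj (c := d) (c' := 1) (g := d * n)) => //.
- by move=> s; rewrite mul1r hpi.
- by rewrite mul1r.
Qed.

Lemma TZ_E_undilate (pi : nat -> nat) : injective pi ->
  (forall s, deg (pi s) = d * deg' s) ->
  forall g : FA F int, TZ_E deg (dilate d g) -> TZ_E deg' g.
Proof.
move=> pi_inj hpi g hg a ha; apply: (relabel_eq0 pi_inj); rewrite (relabel_evalE pi_inj).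
pose b i m := if (d %| m)%Z then relabel pi (a i (m %/ d)%Z) else 0.
have hb i m : ghomog deg m (b i m).
  rewrite /b; case: ifP => [dvd_m|_]; last exact: homog0.
  apply: (relabel_homog pi_inj (c := 1) (c' := d) (g := (m %/ d)%Z)) => //.
  - by move=> s; rewrite mul1r hpi.
  - by rewrite mul1r mulrC divzK.
rewrite -(hg b hb) evalE_dilate; apply: eq_evalE => i n.
by rewrite /b dvdz_mulr ?dvdzz // mulKz.
Qed.

Lemma TZ_E_dilateE r1 r2 r3 v1 v2 v3 :
  is_grading3 r1 r2 r3 v1 v2 v3 deg' ->
  is_grading3 (d * r1) (d * r2) (d * r3) v1 v2 v3 deg ->
  forall g : FA F int, TZ_E deg (dilate d g) <-> TZ_E deg' g.
Proof.
move=> hdeg' hdeg g.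
have [pi1 pi1_inj hpi1] := grading3_injection (in2W (mulfI d_neq0)) hdeg' hdeg.
have hdeg_div : is_grading3 ((d * r1) %/ d)%Z ((d * r2) %/ d)%Z ((d * r3) %/ d)%Z
    v1 v2 v3 deg' by rewrite !mulKz.
have div_inj : {in [seq d * r | r <- [:: r1; r2; r3]] &, injective (fun r => (r %/ d)%Z)}.
  by move=> x y /mapP[r _ ->] /mapP[r' _ ->]; rewrite !mulKz // => ->.
have [pi2 pi2_inj hpi2] := grading3_injection div_inj hdeg hdeg_div.
split; first exact: TZ_E_undilate pi1_inj hpi1 g.
by apply: TZ_E_dilate pi2_inj _ g => s; rewrite hpi2 mulrC divzK // (grading3_dvd hdeg).
Qed.

Lemma TZ_E_var_nondvd i m : (forall i, (d %| deg i)%Z) -> ~~ (d %| m)%Z ->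
  TZ_E deg (favar i m : FA F int).
Proof.
move=> dvd_deg ndvd_m a ha; rewrite evalE_var; apply: homog_eq0 (ha i m) => S.
by apply: contraNneq ndvd_m => <-; apply: dvdz_gdegS.
Qed.

Lemma TZ_E_basis_dilate (S : FA F int -> Prop) :
  (forall i, (d %| deg i)%Z) ->
  (forall g : FA F int, TZ_E deg (dilate d g) <-> TZ_E deg' g) ->
  (forall f, TZ_E deg' f <-> TZgen S f) ->
  forall f, TZ_E deg f <->
    TZgen (fun g => (exists2 f0, S f0 & g = Psi d (Phi d f0))
                    \/ (exists i m, ~~ (d %| m)%Z /\ g = favar i m)) f.
Proof.
move=> dvd_deg dilateE basisS f; set G := fun g => _ \/ _.
have TZgen_TZ_E h : TZgen G h -> TZ_E deg h.
  apply => [|g [[f0 Sf0 ->]|[i [m [ndvd_m ->]]]]]; first exact: TZ_E_is_TZideal.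
    by rewrite PsiPhiE; apply/dilateE/basisS; apply: mem_TZgen.
  exact: TZ_E_var_nondvd.
split=> [hf|]; last exact: TZgen_TZ_E.
have [_ TZgenD _ _ _] := TZgen_is_TZideal G.
have [_ TZ_ED TZ_EZ _ _] := TZ_E_is_TZideal F deg.
have hnondvd : TZgen G (nondvd_part d f).
  by apply: nondvd_part_TZgen => i m ndvd_m; right; exists i, m.
rewrite (undilate_decomp d f); apply: TZgenD; last exact: hnondvd.
apply: (TZgen_dilate d_neq0 (S := S)) => [s Ss|].
  by apply: mem_TZgen; left; exists s; rewrite ?PsiPhiE.
apply/basisS/dilateE; have -> : dilate d (undilate d f) = f - nondvd_part d f.
  by rewrite [X in _ = X - _](undilate_decomp d f) addrK.
by apply: TZ_ED hf _; rewrite -scaleN1r; apply: TZ_EZ; apply: TZgen_TZ_E hnondvd.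
Qed.

End Transfer.

Theorem corollary5p6 (F : fieldType) (charF0 : [pchar F] =i pred0)
    (a b c : int) (k : option nat)
    (ha : 0 < a) (hb : 0 < b) (hbc : - b < c) (hca : c < a) :
  let d := gcdz (gcdz a b) c in
  let a' := (a %/ d)%Z in
  let b' := (b %/ d)%Z in
  let c' := (c %/ d)%Z in
  let d' := gcdz a' b' in
  (match k with Some k0 => is_true (d' - 1 <= k0%:Z) | None => True end) ->
  forall (deg' deg : nat -> int),
    is_grading3 (- b') c' a' None k None deg' ->
    is_grading3 (- b) c a None k None deg ->
  forall S : FA F int -> Prop,
    (forall f, TZ_E deg' f <-> TZgen S f) ->
    forall f : FA F int,
      TZ_E deg f <->
      TZgen (fun g => (exists2 f0, S f0 & g = Psi d (Phi d f0))
                      \/ (exists i m, ~~ (d %| m)%Z /\ g = favar i m)) f.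
Proof.
move=> d a' b' c' d' _ deg' deg hdeg' hdeg S basisS.
have d_neq0 : d != 0.
  by rewrite !gcdz_eq0; apply: contraTN ha => /andP[/andP[/eqP -> _] _]; rewrite ltxx.
have [dvd_a dvd_b dvd_c] : [/\ d %| a, d %| b & d %| c]%Z.
  by rewrite dvdz_gcdr !(dvdz_trans (dvdz_gcdl _ c)) ?dvdz_gcdl ?dvdz_gcdr.
have hdeg_d : is_grading3 (d * - b') (d * c') (d * a') None k None deg.
  by rewrite mulrN ![d * _]mulrC !divzK.
apply: TZ_E_basis_dilate basisS => //; first exact: grading3_dvd hdeg_d.
exact: TZ_E_dilateE hdeg' hdeg_d.
Qed.
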